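(* Let $S_0,S_1$ be semi-infinite stacks that are neighbors. Then for every finite word $W$ in $\Theta$, the stacks $\overline{S_0W}$ and $\overline{S_1W}$ are neighbors.
   Context: Fix an integer $k\ge 2$. Let $\Theta=\{b_1,\dots,b_k,o_1,\dots,o_k,F\}$, where $b_i$ is a burger of type $i$, $o_i$ is an order of type $i$, and $F$ is a flexible order. A semi-infinite stack is an infinite sequence of burgers indexed to the left, i.e. of the form $\cdots s_3s_2s_1$ with $s_1$ the rightmost (top) burger. For a stack $S$ and a finite word $W$, $\overline{SW}$ is obtained by processing $W$ left to right: - a burger is appended on the right; - $o_i$ removes the rightmost $b_i$ present at that time; - $F$ removes the rightmost burger present at that time. (Assume the stacks contain infinitely many burgers of each type, so that every order can be fulfilled.) Two semi-infinite stacks are neighbors if one can be obtained from the other by deleting a single burger, at an arbitrary position. *)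

From mathcomp Require Import all_boot.
From Stdlib Require Import ClassicalEpsilon.
Set Implicit Arguments. Unset Strict Implicit. Unset Printing Implicit Defensive.

(* Burger types are 'I_k.  A semi-infinite stack ... s_3 s_2 s_1 is a
   function S : nat -> 'I_k with S 0 = s_1 the top (rightmost) burger,
   S 1 = s_2, etc. *)
Definition stack (k : nat) := nat -> 'I_k.

Inductive letter (k : nat) : Type :=
  | Burger of 'I_k
  | Order of 'I_k
  | Flex.

Definition all_types_infinite k (S : stack k) : Prop :=
  forall (i : 'I_k) (n : nat), exists m, n <= m /\ S m = i.

(* Delete the burger at position j (counted from the top, 0 = top). *)
Definition delete k (j : nat) (S : stack k) : stack k :=
  fun n => if n < j then S n else S n.+1.

Definition push k (b : 'I_k) (S : stack k) : stack k :=
  fun n => if n is m.+1 then S m else b.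

(* Position of the rightmost (topmost) burger of type i; 0 if there is
   none (never happens under all_types_infinite). *)
Definition first_occ k (S : stack k) (i : 'I_k) : nat :=
  match excluded_middle_informative (exists n, S n == i) with
  | left H => ex_minn H
  | right _ => 0
  end.

Definition step k (S : stack k) (t : letter k) : stack k :=
  match t with
  | Burger b => push b S
  | Order i => delete (first_occ S i) S
  | Flex => delete 0 S
  end.

Definition process k (S : stack k) (W : seq (letter k)) : stack k :=
  foldl (@step k) S W.

Definition neighbors k (S T : stack k) : Prop :=
  (exists j, forall n, T n = delete j S n) \/
  (exists j, forall n, S n = delete j T n).

From Stdlib Require Import FunctionalExtensionality ClassicalEpsilon.
From mathcomp Require Import all_boot zify.

Set Implicit Arguments.
Unset Strict Implicit.
Unset Printing Implicit Defensive.

(* Deleting one burger commutes with every letter up to a shift of the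
   deleted position: pushing moves it one step down, flexible orders and
   orders for other burgers delete a burger above or below it (shifting it
   by at most one), and an order that consumes the deleted burger itself in
   one stack consumes a burger of the other stack that is deleted anyway.
   Hence [delete j S] stays a deletion of [S] along any word. *)

Section Delete.

Variable k : nat.
Implicit Types S : stack k.

Lemma delete_delete S a b : b <= a ->
  delete a (delete b S) = delete b (delete a.+1 S).
Proof.
move=> le_ba; apply: functional_extensionality => n; rewrite /delete.
case: (ltnP n b) => hb; case: (ltnP n a) => ha.
- by rewrite ltnS (ltnW ha).
- by have := leq_trans le_ba ha; rewrite leqNgt hb.
- by rewrite ltnS ha.
- by rewrite ltnS !ltnNge ha (leqW hb).
Qed.

Lemma push_delete S c j : push c (delete j S) = delete j.+1 (push c S).
Proof. by apply: functional_extensionality => -[|n]. Qed.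

Lemma all_types_infinite_delete S j :
  all_types_infinite S -> all_types_infinite (delete j S).
Proof.
move=> infS i n; have [[|m] [le_nm Sm]] := infS i (maxn n j).+1; first by [].
by exists m; rewrite /delete ltnNge (leq_trans (leq_maxr n j) le_nm); split => //; lia.
Qed.

Lemma all_types_infinite_step S t :
  all_types_infinite S -> all_types_infinite (step S t).
Proof.
case: t => [b|i|] infS /=; try exact: all_types_infinite_delete.
by move=> i n; have [m [le_nm Sm]] := infS i n; exists m.+1; split => //; lia.
Qed.

End Delete.

Lemma first_occP k (S : stack k) i : (exists n, S n = i) ->
  S (first_occ S i) = i /\ forall n, n < first_occ S i -> S n <> i.
Proof.
move=> occ_i; rewrite /first_occ; case: excluded_middle_informative => [occ|noocc].
  case: ex_minnP => p /eqP Sp min_p; split => // n lt_np Sn.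
  by have := min_p n (introT eqP Sn); rewrite leqNgt lt_np.
by case: noocc; have [n Sn] := occ_i; exists n; apply/eqP.
Qed.

Lemma first_occ_eq k (S : stack k) i m :
  S m = i -> (forall n, n < m -> S n <> i) -> first_occ S i = m.
Proof.
move=> Sm min_m; have [Sp min_p] := first_occP (ex_intro _ m Sm).
case: (ltngtP (first_occ S i) m) => // [lt_pm|lt_mp].
- by case: (min_m _ lt_pm).
- by case: (min_p _ lt_mp).
Qed.

Section FirstOccurrenceDelete.

Variables (k : nat) (S : stack k) (i : 'I_k).
Hypothesis occ_i : exists n, S n = i.

Lemma first_occ_delete_above j : j < first_occ S i ->
  first_occ (delete j S) i = (first_occ S i).-1.
Proof.
have [Sp min_p] := first_occP occ_i; set p := first_occ S i in Sp min_p *.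
move=> lt_jp; have p_gt0 : 0 < p by lia.
apply: first_occ_eq; first by rewrite /delete ltnNge -ltnS (prednK p_gt0) lt_jp.
by move=> n lt_n; rewrite /delete; case: ifP => _; apply: min_p; lia.
Qed.

Lemma first_occ_delete_below j : first_occ S i < j ->
  first_occ (delete j S) i = first_occ S i.
Proof.
have [Sp min_p] := first_occP occ_i; set p := first_occ S i in Sp min_p *.
move=> lt_pj; apply: first_occ_eq; first by rewrite /delete lt_pj.
by move=> n lt_np; rewrite /delete ifT; [apply: min_p | lia].
Qed.

End FirstOccurrenceDelete.

Lemma step_delete k (S : stack k) j t : all_types_infinite S ->
  exists j', step (delete j S) t = delete j' (step S t).
Proof.
move=> infS; case: t => [b|i|] /=.
- by exists j.+1; exact: push_delete.
- have occ_i : exists n, S n = i by have [m [_ Sm]] := infS i 0; exists m.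
  case: (ltngtP j (first_occ S i)) => [lt_jp|lt_pj|<-].
  + have p_gt0 : 0 < first_occ S i by lia.
    rewrite first_occ_delete_above //; exists j.
    by rewrite delete_delete ?(prednK p_gt0) // -ltnS (prednK p_gt0).
  + rewrite first_occ_delete_below //; case: j lt_pj => // j lt_pj.
    by exists j; rewrite [RHS]delete_delete.
  + by exists (first_occ (delete j S) i).
- case: j => [|j]; first by exists 0.
  by exists j; rewrite [RHS]delete_delete.
Qed.

Lemma process_delete k (S : stack k) j W : all_types_infinite S ->
  exists j', process (delete j S) W = delete j' (process S W).
Proof.
elim: W S j => [|t W IH] S j infS /=; first by exists j.
have [j' ->] := step_delete j t infS.
exact: IH (all_types_infinite_step t infS).
Qed.

Theorem lemma5p3 (k : nat) (hk : 2 <= k) (S0 S1 : stack k)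
    (h0 : all_types_infinite S0) (h1 : all_types_infinite S1)
    (hn : neighbors S0 S1) (W : seq (letter k)) :
  neighbors (process S0 W) (process S1 W).
Proof.
case: hn => [[j S1E]|[j S0E]].
- rewrite (functional_extensionality _ _ S1E).
  by have [j' ->] := process_delete j W h0; left; exists j'.
- rewrite (functional_extensionality _ _ S0E).
  by have [j' ->] := process_delete j W h1; right; exists j'.
Qed.
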